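(* Consider a single advertiser in a single-slot hybrid auction, with per-click value $v>0$. The advertiser's belief about its click-through rate is a random variable $\mathcal{P}$ on $[0,1]$ equal to the auctioneer's prior, with mean $p=\mathbb{E}[\mathcal{P}]>0$, and the auctioneer's index equals $q=p$. The advertiser submits a bid $(m,c)$ (per-impression and per-click), and has effective bid $\max(m,cq)$; if $R$ denotes the highest competing effective bid, the advertiser obtains the impression iff its effective bid exceeds $R$, paying $R$ per impression if $m>cq$ and $R/q$ per click otherwise. The advertiser has a utility function $U:\mathbb{R}\to\mathbb{R}$ that is monotone increasing with monotone derivative and $U(0)=0$, and, writing $I_R$ for the indicator that it obtains the impression, it evaluates a bid by $I_R\cdot \mathbb{E}[U(v\mathcal{P}-R)]$ if it is charged per impression and $I_R\cdot\mathbb{E}[U(v\mathcal{P}-R\mathcal{P}/p)]$ if it is charged per click (so that it seeks to maximize $I_R\cdot\max(\mathbb{E}[U(v\mathcal{P}-R)],\mathbb{E}[U(v\mathcal{P}-R\mathcal{P}/p)])$). Then: if $U$ is concave, bidding $(0,v)$ is a dominant strategy; if $U$ is convex, there is a dominant strategy of the form $(m,0)$ for a suitably chosen $m$.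
   Context: A strategy is dominant if for every value of the highest competing effective bid $R$ it achieves the maximum possible value of the advertiser's objective. *)

From HB Require Import structures.
From mathcomp Require Import all_boot all_order all_algebra.
From mathcomp Require Import all_classical all_reals all_analysis.
Set Implicit Arguments. Unset Strict Implicit. Unset Printing Implicit Defensive.
Import Order.TTheory GRing.Theory Num.Theory.
Local Open Scope ring_scope.

Definition concave_fun (R : realType) (U : R -> R) : Prop :=
  forall (x y t : R), 0 <= t <= 1 ->
    t * U x + (1 - t) * U y <= U (t * x + (1 - t) * y).

Definition convex_fun (R : realType) (U : R -> R) : Prop :=
  forall (x y t : R), 0 <= t <= 1 ->
    U (t * x + (1 - t) * y) <= t * U x + (1 - t) * U y.

Definition objective (d : measure_display) (T : measurableType d) (R : realType)
  (P : probability T R) (X : T -> R) (v : R) (U : R -> R)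
  (m c Rc : R) : \bar R :=
  let p : R := fine (expectation P X) in
  let q : R := p in
  if (Rc < Num.max m (c * q))%R then
    (if (c * q < m)%R then expectation P (fun w => U (v * X w - Rc)%R)
     else expectation P (fun w => U (v * X w - Rc * X w / p)%R))
  else 0%E.

Definition dominant (d : measure_display) (T : measurableType d) (R : realType)
  (P : probability T R) (X : T -> R) (v : R) (U : R -> R) (m c : R) : Prop :=
  forall Rc : R, 0 <= Rc ->
    forall m' c' : R, 0 <= m' -> 0 <= c' ->
      (objective P X v U m' c' Rc <= objective P X v U m c Rc)%E.

From HB Require Import structures.
From mathcomp Require Import all_boot all_order all_algebra.
From mathcomp Require Import all_classical all_reals all_analysis.
From mathcomp Require Import ring lra.
Set Implicit Arguments. Unset Strict Implicit. Unset Printing Implicit Defensive.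
Import Order.TTheory GRing.Theory Num.Theory numFieldNormedType.Exports.
Local Open Scope classical_set_scope.
Local Open Scope ring_scope.

(* Write k = v - R/p, so that vP - R = kP + (R/p)(P - p), while paying per click
   leaves the advertiser U(kP).  For concave U, the tangent at kP and the fact
   that U' is nonincreasing give U(vP - R) <= U(kP) + (R/p) U'(kp) (P - p), whose
   expectation is E[U(kP)]: for k >= 0 paying per click is at least as good,
   while for k <= 0 both payment modes are worth at most 0 (Jensen for the
   per-impression one).  The bid (0, v) wins exactly when R < vp, so it is
   dominant.  For convex U the inequality reverses, so the per-impression value
   a(R) = E[U(vP - R)] is the best achievable; a is nonincreasing and changes
   sign once, at some m, and the bid (m, 0) wins exactly when R < m. *)

Lemma concave_le_tangent (R : realType) (U : R -> R) x y :
  concave_fun U -> derivable U x 1 -> U y <= U x + derive1 U x * (y - x).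
Proof.
move=> cU dx.
have dU : differentiable U x by apply/derivable1_diffP.
set d := y - x.
have hD : 'D_d U x = d * derive1 U x.
  rewrite deriveE // derive1E' //.
  by rewrite -{1}[d]mulr1 -[d * 1]/(d *: (1:R)) linearZ.
have cv : (fun h => h^-1 *: (U (h *: d + x) - U x)) @ 0^' --> 'D_d U x.
  exact: diff_derivable.
have cv' : (fun h => h^-1 *: (U (h *: d + x) - U x)) @ 0^'+ --> 'D_d U x.
  move=> A /cv /nbhs_ballP [_ /posnumP[e] xe_A].
  exists e%:num => //= z xe_z; rewrite lt_def => /andP [zne _]; exact: xe_A.
have : U y - U x <= 'D_d U x.
  apply: (cvgr_to_ge cv'); near=> h.
  have h0 : 0 < h by near: h; exact: nbhs_right_gt.
  have h1 : h <= 1 by near: h; exact: nbhs_right_le.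
  have chord : h * U y + (1 - h) * U x <= U (h * y + (1 - h) * x).
    by apply: cU; rewrite ltW ?h1.
  have -> : h *: d + x = h * y + (1 - h) * x.
    by rewrite /GRing.scale/= /d; ring.
  rewrite /= /GRing.scale /= -(ler_pM2l h0) mulrA mulfV ?gt_eqF // mul1r.
  lra.
by rewrite hD mulrC lerBlDl.
Unshelve. all: end_near. Qed.

Lemma convex_fun_concaveN (R : realType) (U : R -> R) :
  convex_fun U -> concave_fun (- U).
Proof. by move=> cU x y t /cU; rewrite /= !mulrN -opprD lerN2. Qed.

Lemma convex_ge_tangent (R : realType) (U : R -> R) x y :
  convex_fun U -> derivable U x 1 -> U x + derive1 U x * (y - x) <= U y.
Proof.
move=> /convex_fun_concaveN cU dx.
have := concave_le_tangent y cU (derivableN dx).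
rewrite derive1N // !fctE mulNr; lra.
Qed.

Lemma concave_derive1_nonincr (R : realType) (U : R -> R) x y :
  concave_fun U -> (forall z, derivable U z 1) ->
  x <= y -> derive1 U y <= derive1 U x.
Proof.
move=> cU dU; rewrite le_eqVlt => /orP[/eqP -> //|xy].
have := concave_le_tangent y cU (dU x); have := concave_le_tangent x cU (dU y).
move=> t1 t2; have : 0 <= (derive1 U x - derive1 U y) * (y - x) by lra.
by rewrite pmulr_lge0 ?subr_gt0 // subr_ge0.
Qed.

Lemma convex_derive1_nondecr (R : realType) (U : R -> R) x y :
  convex_fun U -> (forall z, derivable U z 1) ->
  x <= y -> derive1 U x <= derive1 U y.
Proof.
move=> /convex_fun_concaveN cU dU xy.
have dNU z : derivable (- U) z 1 by exact: derivableN.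
by have := concave_derive1_nonincr cU dNU xy; rewrite !derive1N // lerN2.
Qed.

Lemma concave_le_shifted_tangent (R : realType) (U : R -> R) k s p x :
  concave_fun U -> (forall z, derivable U z 1) -> 0 <= k -> 0 <= s ->
  U (k * x + s * (x - p)) <= U (k * x) + s * derive1 U (k * p) * (x - p).
Proof.
move=> cU dU k0 s0.
have := concave_le_tangent (k * x + s * (x - p)) cU (dU (k * x)).
have -> : k * x + s * (x - p) - k * x = s * (x - p) by ring.
move=> tangent; apply: le_trans tangent _; rewrite lerD2l.
(* U' is nonincreasing, so U'(kx) - U'(kp) and x - p have opposite signs *)
suff : 0 <= s * ((derive1 U (k * p) - derive1 U (k * x)) * (x - p)) by nra.
apply: mulr_ge0 => //; have [xp|px] := leP x p.
- rewrite -mulrNN !opprB; apply: mulr_ge0; rewrite subr_ge0 //.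
  by apply: concave_derive1_nonincr => //; rewrite ler_wpM2l.
- apply: mulr_ge0; rewrite subr_ge0; last exact: ltW.
  by apply: concave_derive1_nonincr => //; rewrite ler_wpM2l // ltW.
Qed.

Lemma convex_ge_shifted_tangent (R : realType) (U : R -> R) k s p x :
  convex_fun U -> (forall z, derivable U z 1) -> 0 <= k -> 0 <= s ->
  U (k * x) <= U (k * x + s * (x - p)) - s * derive1 U (k * p) * (x - p).
Proof.
move=> /convex_fun_concaveN cU dU k0 s0.
have dNU z : derivable (- U) z 1 by exact: derivableN.
have := concave_le_shifted_tangent p x cU dNU k0 s0.
rewrite derive1N // !fctE mulrN mulNr; lra.
Qed.

Lemma nonincreasing_sign_threshold (R : realType) (f : R -> R) (b : R) :
  (forall x y, x <= y -> f y <= f x) -> 0 <= b -> 0 <= f 0 -> f b <= 0 ->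
  (forall r, exists C, forall e, 0 <= e -> f r <= f (r + e) + C * e) ->
  exists2 m, 0 <= m & forall r, (r < m -> 0 <= f r) /\ (m <= r -> f r <= 0).
Proof.
move=> f_nonincr b0 f0 fb f_right.
pose S := [set r | 0 <= r <= b /\ 0 <= f r].
have S0 : S 0 by split; rewrite ?lexx.
have supS : has_sup S by split; [exists 0 | exists b => r [/andP[]]].
exists (sup S) => [|r]; first exact: sup_upper_bound.
split => [rm|mr].
  have [|e [_ fe] re] := sup_adherent (eps := sup S - r) _ supS.
    by rewrite subr_gt0.
  by apply: le_trans fe (f_nonincr _ _ _); lra.
rewrite leNgt; apply/negP => fr.
have rb : r < b by rewrite ltNge; apply/negP => /f_nonincr; lra.
have [C fC] := f_right r.
(* f stays positive on [r, r + e] for e this small, so r + e lies in S *)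
pose c := `|C| + 1; have c0 : 0 < c by rewrite ltr_pwDr.
pose e := Num.min (b - r) (f r / (2 * c)).
have e0 : 0 < e by rewrite lt_min subr_gt0 rb divr_gt0 // mulr_gt0.
have eb : e <= b - r by rewrite /e ge_min lexx.
have ce : c * e <= f r / 2.
  have -> : f r / 2 = c * (f r / (2 * c)) by field; rewrite gt_eqF.
  by apply: ler_wpM2l; [exact: ltW | rewrite /e ge_min lexx orbT].
have Ce : C * e <= c * e.
  by apply: ler_wpM2r; [exact: ltW | rewrite /c; have := ler_norm C; lra].
have Sre : S (r + e).
  have := fC e (ltW e0); have := sup_upper_bound supS S0.
  by split; [apply/andP; split|]; lra.
by have := sup_upper_bound supS Sre; lra.
Qed.

Section Expectation.
Context (d : measure_display) (T : measurableType d) (R : realType)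
  (P : probability T R).

Lemma Lfun1_bounded (f : T -> R) (M : R) :
  measurable_fun setT f -> (forall w, `|f w| <= M) -> f \in Lfun P 1.
Proof.
move=> mf fM; apply/Lfun1_integrable/measurable_bounded_integrable => //.
  by apply: (le_lt_trans (probability_le1 _ measurableT)); exact: ltry.
rewrite /bounded_near; near=> N => w _ /=; apply: le_trans (fM w) _.
near: N; exact: nbhs_pinfty_ge (num_real M).
Unshelve. all: end_near. Qed.

Lemma le_expectation (F G : T -> R) : F \in Lfun P 1 -> G \in Lfun P 1 ->
  (forall w, F w <= G w) -> ('E_P[F] <= 'E_P[G])%E.
Proof.
move=> lF lG FG; rewrite unlock; apply: le_integral => //.
- exact/Lfun1_integrable.
- exact/Lfun1_integrable.
- by move=> w _; rewrite lee_fin.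
Qed.

Lemma expectation_le0 (F : T -> R) : F \in Lfun P 1 ->
  (forall w, F w <= 0) -> ('E_P[F] <= 0)%E.
Proof.
move=> lF F0; have := @le_expectation F (cst 0) lF (Lfun_cst _ _ _) F0.
by rewrite expectation_cst.
Qed.

Lemma expectation_le_centered (X F G : T -> R) (p K : R) :
  X \in Lfun P 1 -> ('E_P[X] = p%:E)%E -> F \in Lfun P 1 -> G \in Lfun P 1 ->
  (forall w, F w <= G w + K * (X w - p)) -> ('E_P[F] <= 'E_P[G])%E.
Proof.
move=> lX EX lF lG FG.
have lXp : (X \- cst p) \in Lfun P 1 by apply: rpredB => //; exact: Lfun_cst.
have lKXp : (K \o* (X \- cst p)) \in Lfun P 1 by exact: Lfun_scale.
have EKXp : ('E_P[(K \o* (X \- cst p))%R] = 0)%E.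
  by rewrite expectationZl // expectationB ?Lfun_cst // EX expectation_cst subee ?mule0.
rewrite -[leRHS]adde0 -EKXp -expectationD //.
by apply: le_expectation => [||w] //; [exact: rpredD | rewrite /= mulrC].
Qed.

Lemma concave_expectation_affine_le (X : T -> R) (U : R -> R) (p a b : R) :
  concave_fun U -> (forall z, derivable U z 1) ->
  X \in Lfun P 1 -> ('E_P[X] = p%:E)%E -> (fun w => U (a * X w + b)) \in Lfun P 1 ->
  ('E_P[fun w => U (a * X w + b)%R] <= (U (a * p + b))%:E)%E.
Proof.
move=> cU dU lX EX lUX; rewrite -(expectation_cst P).
apply: (expectation_le_centered (K := derive1 U (a * p + b) * a) lX EX lUX)
  => [|w]; first exact: Lfun_cst.
have := concave_le_tangent (a * X w + b) cU (dU (a * p + b)).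
by rewrite /= -mulrA; congr (_ <= _ + _ * _); ring.
Qed.

End Expectation.

Section Auction.
Context (d : measure_display) (T : measurableType d) (R : realType)
  (P : probability T R) (X : {RV P >-> R}) (U : R -> R).
Hypotheses (X01 : forall w, 0 <= X w <= 1) (U_nondecr : {homo U : x y / x <= y})
  (dU : forall x, derivable U x 1) (U0 : U 0 = 0).

Lemma Lfun_belief : (X : T -> R) \in Lfun P 1.
Proof.
apply: (Lfun1_bounded P (M := 1)); first exact: measurable_funPT.
by move=> w; have /andP[X0 X1] := X01 w; rewrite ger0_norm.
Qed.

Lemma Lfun_utility_affine (a b : R) : (fun w => U (a * X w + b)) \in Lfun P 1.
Proof.
apply: (Lfun1_bounded P (M := `|U (b - `|a|)| + `|U (b + `|a|)|)).
  apply: measurableT_comp.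
    apply: measurable_realfun.continuous_measurable_fun => x.
    exact/differentiable_continuous/derivable1_diffP.
  apply: measurable_realfun.measurable_funD; last exact: measurable_cst.
  apply: measurable_realfun.measurable_funM; first exact: measurable_cst.
  exact: measurable_funPT.
move=> w; have /andP[X0 X1] := X01 w.
have [lo hi] : b - `|a| <= a * X w + b /\ a * X w + b <= b + `|a|.
  by have [a0|a0] := leP 0 a; [rewrite ger0_norm // | rewrite ltr0_norm //]; split; nra.
have := U_nondecr lo; have := U_nondecr hi.
have := ler_norm (U (b + `|a|)); have := ler_norm (- U (b - `|a|)); rewrite normrN.
have := normr_ge0 (U (b + `|a|)); have := normr_ge0 (U (b - `|a|)).
by rewrite ler_norml => *; apply/andP; split; lra.
Qed.

Variables (p v : R).
Hypotheses (EX : ('E_P[X] = p%:E)%E) (p0 : 0 < p) (v0 : 0 < v).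

Definition impression_utility (r : R) (w : T) : R := U (v * X w - r).
Definition click_utility (r : R) (w : T) : R := U (v * X w - r * X w / p).

Lemma Lfun_impression_utility r : impression_utility r \in Lfun P 1.
Proof. exact: Lfun_utility_affine v (- r). Qed.

Lemma click_utilityE r w : click_utility r w = U ((v - r / p) * X w).
Proof. by rewrite /click_utility; congr U; ring. Qed.

Lemma Lfun_click_utility r : click_utility r \in Lfun P 1.
Proof.
have -> : click_utility r = fun w => U ((v - r / p) * X w + 0).
  by apply: funext => w; rewrite click_utilityE addr0.
exact: Lfun_utility_affine.
Qed.

Lemma expectation_click_utility_ge0 r : r <= v * p -> (0 <= 'E_P[click_utility r])%E.
Proof.
move=> rvp; apply: expectation_ge0 => w; rewrite click_utilityE -U0.
apply/U_nondecr/mulr_ge0; first by rewrite subr_ge0 ler_pdivrMr.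
by have /andP[] := X01 w.
Qed.

Lemma expectation_click_utility_le0 r : v * p <= r -> ('E_P[click_utility r] <= 0)%E.
Proof.
move=> vpr; apply: expectation_le0 => [|w]; first exact: Lfun_click_utility.
rewrite click_utilityE -U0; apply/U_nondecr/mulr_le0_ge0.
  by rewrite subr_le0 ler_pdivlMr.
by have /andP[] := X01 w.
Qed.

Lemma expectation_impression_utility_nonincr r r' : r <= r' ->
  ('E_P[impression_utility r'] <= 'E_P[impression_utility r])%E.
Proof.
move=> rr'; apply: le_expectation => [||w]; try exact: Lfun_impression_utility.
by apply: U_nondecr; rewrite lerD2l lerN2.
Qed.

Section Concave.
Hypothesis U_concave : concave_fun U.

Lemma concave_impression_le_click r : 0 <= r <= v * p ->
  ('E_P[impression_utility r] <= 'E_P[click_utility r])%E.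
Proof.
move=> /andP[r0 rvp]; set k := v - r / p.
have k0 : 0 <= k by rewrite subr_ge0 ler_pdivrMr.
apply: (expectation_le_centered (K := r / p * derive1 U (k * p)) Lfun_belief EX);
  [exact: Lfun_impression_utility | exact: Lfun_click_utility | move=> w].
rewrite /impression_utility click_utilityE -/k.
have -> : v * X w - r = k * X w + r / p * (X w - p) by rewrite /k; field; exact: lt0r_neq0.
by apply: concave_le_shifted_tangent => //; rewrite divr_ge0 // ltW.
Qed.

Lemma concave_impression_utility_le0 r : v * p <= r ->
  ('E_P[impression_utility r] <= 0)%E.
Proof.
move=> vpr; apply: le_trans (concave_expectation_affine_le U_concave dU
  Lfun_belief EX (Lfun_utility_affine v (- r))) _.
by rewrite lee_fin -U0; apply: U_nondecr; lra.
Qed.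

Lemma dominant_concave : dominant P X v U 0 v.
Proof.
move=> r r0 m c m0 c0; rewrite /objective EX /=.
have vp0 : 0 <= v * p by rewrite mulr_ge0 // ltW.
rewrite (max_r vp0) [v * p < 0]ltNge vp0 /=.
have [rvp|vpr] := ltP r (v * p).
- case: ifP => _; last exact: expectation_click_utility_ge0 (ltW rvp).
  case: ifP => _ //; apply: concave_impression_le_click.
  by rewrite r0 ltW.
- case: ifP => _ //; case: ifP => _.
  + exact: concave_impression_utility_le0.
  + exact: expectation_click_utility_le0.
Qed.

End Concave.

Definition impression_value (r : R) : R := fine ('E_P[impression_utility r])%E.

Lemma impression_valueE r : ('E_P[impression_utility r] = (impression_value r)%:E)%E.
Proof. by rewrite fineK // expectation_fin_num // Lfun_impression_utility. Qed.

Section Convex.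
Hypothesis U_convex : convex_fun U.

Lemma convex_click_le_impression r : 0 <= r <= v * p ->
  ('E_P[click_utility r] <= 'E_P[impression_utility r])%E.
Proof.
move=> /andP[r0 rvp]; set k := v - r / p.
have k0 : 0 <= k by rewrite subr_ge0 ler_pdivrMr.
apply: (expectation_le_centered (K := - (r / p * derive1 U (k * p))) Lfun_belief EX);
  [exact: Lfun_click_utility | exact: Lfun_impression_utility | move=> w].
rewrite /impression_utility click_utilityE -/k mulNr.
have -> : v * X w - r = k * X w + r / p * (X w - p) by rewrite /k; field; exact: lt0r_neq0.
by apply: convex_ge_shifted_tangent => //; rewrite divr_ge0 // ltW.
Qed.

Lemma convex_click_utility_le_max r : 0 <= r ->
  ('E_P[click_utility r] <= maxe ('E_P[impression_utility r]) 0)%E.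
Proof.
move=> r0; have [rvp|vpr] := leP r (v * p).
  by rewrite le_max convex_click_le_impression ?r0.
by rewrite le_max expectation_click_utility_le0 ?orbT // ltW.
Qed.

Lemma convex_impression_value_shift r e : 0 <= e ->
  impression_value r <= impression_value (r + e) + derive1 U (v - r) * e.
Proof.
move=> e0; rewrite -lee_fin EFinD -!impression_valueE -(expectation_cst P).
rewrite -expectationD ?Lfun_impression_utility ?Lfun_cst //.
apply: le_expectation => [||w]; first exact: Lfun_impression_utility.
  by apply: rpredD; [exact: Lfun_impression_utility | exact: Lfun_cst].
rewrite /impression_utility /=.
have := convex_ge_tangent (v * X w - (r + e)) U_convex (@dU (v * X w - r)).
have vXv : v * X w <= v by have /andP[_ X1] := X01 w; rewrite ler_piMr // ltW.
have : derive1 U (v * X w - r) <= derive1 U (v - r).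
  by apply: convex_derive1_nondecr => //; lra.
nra.
Qed.

Lemma dominant_convex : exists m, 0 <= m /\ dominant P X v U m 0.
Proof.
have [|||||m m0 sign_a] := nonincreasing_sign_threshold (f := impression_value) (b := v).
- by move=> r r' rr'; rewrite -lee_fin -!impression_valueE;
    exact: expectation_impression_utility_nonincr.
- exact: ltW.
- rewrite -lee_fin -impression_valueE; apply: expectation_ge0 => w.
  rewrite /impression_utility subr0 -U0; apply/U_nondecr/mulr_ge0; first exact: ltW.
  by have /andP[] := X01 w.
- rewrite -lee_fin -impression_valueE; apply: expectation_le0 => [|w].
    exact: Lfun_impression_utility.
  rewrite /impression_utility -U0; apply: U_nondecr; rewrite subr_le0.
  by have /andP[_ X1] := X01 w; rewrite ler_piMr // ltW.
- by move=> r; exists (derive1 U (v - r)); exact: convex_impression_value_shift.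
exists m; split => // r r0 m' c' m'0 c'0; rewrite /objective EX /= mul0r (max_l m0).
have := convex_click_utility_le_max r0; rewrite [in leRHS]impression_valueE.
have [rm|mr] := ltP r m.
- have a_ge0 := (sign_a r).1 rm; rewrite (le_lt_trans r0 rm) /= impression_valueE.
  rewrite (max_l (_ : 0 <= _)%E) ?lee_fin // => click_le_a.
  by case: ifP => _ //; case: ifP.
- have a_le0 := (sign_a r).2 mr; rewrite (max_r (_ : _ <= 0)%E) ?lee_fin // => click_le0.
  case: ifP => _ //; case: ifP => _ //.
  by rewrite impression_valueE lee_fin.
Qed.

End Convex.
End Auction.

Theorem lemma2 (d : measure_display) (T : measurableType d) (R : realType)
  (P : probability T R) (X : {RV P >-> R}) (v : R) (U : R -> R) :
  0 < v ->
  (forall w, 0 <= X w <= 1) ->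
  (0 < fine 'E_P[X])%R ->
  {homo U : x y / x <= y} ->
  (forall x, derivable U x 1) ->
  ({homo derive1 U : x y / x <= y} \/ {homo derive1 U : x y / y <= x}) ->
  U 0 = 0 ->
  (concave_fun U -> dominant P X v U 0 v) /\
  (convex_fun U -> exists m : R, 0 <= m /\ dominant P X v U m 0).
Proof.
(* the monotonicity of U' is implied by concavity, resp. convexity *)
move=> v0 X01 p0 U_nondecr dU _ U0.
have EX : ('E_P[X] = (fine 'E_P[X])%:E)%E.
  by rewrite fineK // expectation_fin_num // (Lfun_belief X01).
split=> [U_concave|U_convex].
- exact (dominant_concave X01 U_nondecr dU U0 EX p0 v0 U_concave).
- exact (dominant_convex X01 U_nondecr dU U0 EX p0 v0 U_convex).
Qed.
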